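(* Let $U$ be a countably infinite universe, $\mathcal{C}=(L_1,L_2,\ldots)$ a countably infinite collection of languages over $U$, and consider the Noisy Procedure in the context. For any $n\ge0$, $i\ge1$, and any step $l\ge p(n,i)$ (where $p(n,i)$ is the position of $(n,i)$ in the diagonal order), let $k$ be the position of the entry $L_{n,i}$ in $\mathcal{C}'_l=(L'_1,\ldots,L'_l)$ at the end of step $l$. Then $T(L_{n,i})$ is a set of maximum size among all sets $T$ satisfying: $T$ is finite, and there exists a subcollection $\mathcal{D}$ of the entries $(L'_1,\ldots,L'_k)$ that includes $L'_k$, whose intersection $\bigcap_{L_{a,b}\in\mathcal{D}}L_b$ is finite, and such that $T$ is $a$-contained in $L_b$ for every entry $L_{a,b}\in\mathcal{D}$.
   Context: A language is an infinite subset of $U$; a collection is a sequence of languages (repetitions allowed, entries distinguished by index). For a set $T$, language $L$ and integer $a\ge0$, $T$ is $a$-contained in $L$ if $\sum_{x\in T}\mathbf{1}[x\notin L]\le a$. Diagonal order: pairs $(n,i)$, $n\ge0$, $i\ge1$, ordered as $(0,1),(1,1),(0,2),(2,1),(1,2),(0,3),\ldots$, i.e. for $n'=0,1,2,\ldots$ and $h=0,\ldots,n'$ the pair $(n'-h,h+1)$. Each pair $(a,b)$ has an entry $L_{a,b}$, a copy of $L_b$ labelled $(a,b)$. Noisy Procedure. Set $\mathcal{C}'_0=()$. For $l=1,2,\ldots$, let $(n,i)$ be the $l$-th pair; append $L_{n,i}$ to the end of $\mathcal{C}'_{l-1}$ to get $\mathcal{C}'_l=(L'_1,\ldots,L'_l)$,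 set $j=l$. Repeat: (A) let $T$ be a finite subset of $U$ of largest size for which there is a subcollection $\mathcal{D}$ of the entries $(L'_1,\ldots,L'_j)$ including $L'_j$, with $T$ $a$-contained in $L_b$ for every entry $L_{a,b}\in\mathcal{D}$ and $\bigcap_{L_{a,b}\in\mathcal{D}}L_b$ finite; let $\mathcal{C}_{\mathrm{chk}}$ be such a $\mathcal{D}$ and $m_{\mathrm{chk}}=|T|$ ($0$ if no such $\mathcal{D}$ exists). (B) If $j\le1$ or $m_{\mathrm{chk}}>m^\star_a(L_b)$ where $L'_{j-1}=L_{a,b}$, stop. (C) Otherwise swap the entries at positions $j-1,j$ in $\mathcal{C}'_l$, set $j\leftarrow j-1$, return to (A). On stopping, set $T(L_{n,i})=T$, $\mathcal{C}(L_{n,i})=\mathcal{C}_{\mathrm{chk}}$, $m^\star_n(L_i)=m_{\mathrm{chk}}$; the ordering $\mathcal{C}'_l$ at the end of step $l$ is the one obtained when this loop stops. *)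

From mathcomp Require Import all_boot.
From mathcomp Require Import boolp classical_sets cardinality.

Set Implicit Arguments.
Unset Strict Implicit.
Unset Printing Implicit Defensive.

Local Open Scope classical_set_scope.

(* An entry L_{a,b} of the procedure is represented by its label (a, b). *)
Definition entry := (nat * nat)%type.

(* Diagonal order: (0,1),(1,1),(0,2),(2,1),(1,2),(0,3),...
   diag_pair q is the (q+1)-th pair (i.e. the pair processed at step q+1). *)
Definition next_pair (e : entry) : entry :=
  let: (a, b) := e in if a is a'.+1 then (a', b.+1) else (b, 1).

Fixpoint diag_pair (q : nat) : entry :=
  if q is q'.+1 then next_pair (diag_pair q') else (0, 1).

Section Noisy.
Variable U : choiceType.
Variable L : nat -> set U.   (* the collection: L b is the language L_b, b >= 1 *)

Definition a_contained (T : seq U) (A : set U) (a : nat) : bool :=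
  count (fun x => x \notin A) T <= a.

(* T is admissible for the prefix s = (L'_1, ..., L'_j): T is a finite set
   (a duplicate-free list) and there is a subcollection D of the entries of s
   containing L'_j (the last entry of s), with finite intersection of the
   underlying languages, such that T is a-contained in L_b for every L_{a,b} in D. *)
Definition admissible (s : seq entry) (T : seq U) : Prop :=
  uniq T /\
  exists D : seq entry,
    {subset D <= s} /\ last (0, 0) s \in D /\
    finite_set [set x | forall e, e \in D -> L e.2 x] /\
    (forall e, e \in D -> a_contained T (L e.2) e.1).

(* m is m_chk for the prefix s: the largest size of an admissible T
   (0 if there is no admissible T). *)
Definition max_size (s : seq entry) (m : nat) : Prop :=
  ((exists T, admissible s T /\ size T = m) \/
   ((forall T, ~ admissible s T) /\ m = 0)) /\
  (forall T, admissible s T -> size T <= m).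

(* T is a valid choice of T in step (A) for prefix s: an admissible set of
   largest size (the empty set if there is no admissible set). *)
Definition max_choice (s : seq entry) (T : seq U) : Prop :=
  (admissible s T \/ ((forall T', ~ admissible s T') /\ T = [::])) /\
  (forall T', admissible s T' -> size T' <= size T).

Definition swap_adj (s : seq entry) (p : nat) : seq entry :=
  take p s ++ [:: nth (0, 0) s p.+1; nth (0, 0) s p] ++ drop p.+2 s.

(* The inner loop (A)-(C).  inner mstar C j C' jf : starting from ordering C
   with current index j (1-based), the loop stops with ordering C' and index jf.
   L'_j = nth (j-1) C, L'_{j-1} = nth (j-2) C. *)
Inductive inner (mstar : entry -> nat) : seq entry -> nat -> seq entry -> nat -> Prop :=
| inner_stop C j m :
    max_size (take j C) m ->
    (j <= 1 \/ mstar (nth (0, 0) C (j - 2)) < m) ->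
    inner mstar C j C j
| inner_swap C j m C' jf :
    max_size (take j C) m ->
    1 < j -> m <= mstar (nth (0, 0) C (j - 2)) ->
    inner mstar (swap_adj C (j - 2)) j.-1 C' jf ->
    inner mstar C j C' jf.

(* A run of the Noisy Procedure: C l = C'_l (ordering at the end of step l),
   mstar (n,i) = m*_n(L_i), Tmap (n,i) = T(L_{n,i}). *)
Definition noisy_run (C : nat -> seq entry) (mstar : entry -> nat)
    (Tmap : entry -> seq U) : Prop :=
  C 0 = [::] /\
  forall l, let e := diag_pair l in
    exists j,
      inner mstar (rcons (C l) e) l.+1 (C l.+1) j /\
      max_choice (take j (C l.+1)) (Tmap e) /\
      mstar e = size (Tmap e).

End Noisy.

From mathcomp Require Import all_boot.
From mathcomp Require Import boolp classical_sets cardinality.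

Set Implicit Arguments.
Unset Strict Implicit.
Unset Printing Implicit Defensive.

(* When L_{n,i} is inserted, T(L_{n,i}) is by construction a largest
   admissible set for the prefix ending at L_{n,i}.  Every later step only
   moves the newly appended entry f towards the front by adjacent swaps, and
   each swap preserves this property.  Swapping two entries on the same side of
   L_{n,i} changes neither the entries of its prefix nor its last entry.  When
   f passes L_{n,i}, the loop has just found m_chk <= m*_n(L_i) = |T(L_{n,i})|
   for the prefix ending at f.  So a set admissible for the enlarged prefix is
   either witnessed by a subcollection containing f, and then it is no larger,
   or it was already admissible for the old prefix. *)

(* The position of (a, b) in the diagonal order: diagonal a + b - 1 is
   preceded by 1 + 2 + ... + (a + b - 1) pairs. *)
Definition diag_index (e : entry) : nat := 'C(e.1 + e.2, 2) + e.2.-1.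

Lemma diag_pair_snd_gt0 q : 0 < (diag_pair q).2.
Proof. by elim: q => [|q] //=; case: (diag_pair q) => [[|a] b]. Qed.

Lemma diag_pairK : cancel diag_pair diag_index.
Proof.
elim=> [//|q IH] /=; move: IH (diag_pair_snd_gt0 q); rewrite /diag_index.
case: (diag_pair q) => [[|a] b] /= <-; case: b => // b _.
  by rewrite add0n addn1 binS bin1 addn0 addnS.
by rewrite addSn !addnS.
Qed.

Lemma diag_pair_inj : injective diag_pair.
Proof. exact: can_inj diag_pairK. Qed.

Section Upto.
Variable T : eqType.
Implicit Types (s : seq T) (x y : T).

Definition upto s x := take (index x s).+1 s.

Lemma upto_catl s1 s2 x : x \in s1 -> upto (s1 ++ s2) x = upto s1 x.
Proof. by move=> xs1; rewrite /upto index_cat xs1 takel_cat ?index_mem. Qed.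

Lemma upto_catr s1 s2 x : x \notin s1 -> upto (s1 ++ s2) x = s1 ++ upto s2 x.
Proof.
move=> xs1; rewrite /upto index_cat (negbTE xs1) take_cat ltnNge -addnS leq_addr.
by rewrite addKn.
Qed.

Lemma upto_cons s x y : y != x -> upto (y :: s) x = y :: upto s x.
Proof. by move=> yx; rewrite /upto /= (negbTE yx). Qed.

Lemma upto_head s x : upto (x :: s) x = [:: x].
Proof. by rewrite /upto /= eqxx take0. Qed.

Lemma last_upto s x z : x \in s -> last z (upto s x) = x.
Proof.
by move=> xs; rewrite /upto (take_nth x) ?index_mem // last_rcons nth_index.
Qed.

Lemma perm_swap2 s1 s2 x y : perm_eq (s1 ++ x :: y :: s2) (s1 ++ y :: x :: s2).
Proof. by rewrite perm_cat2l (perm_catCA [:: x] [:: y]). Qed.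

Lemma take_size_cat2 s1 s2 x y : take (size s1).+2 (s1 ++ x :: y :: s2) = s1 ++ [:: x; y].
Proof. by rewrite -[_ :: _]/([:: x; y] ++ s2) catA take_size_cat ?size_cat ?addn2. Qed.

End Upto.

Lemma swap_adj_cat s1 s2 x y : swap_adj (s1 ++ x :: y :: s2) (size s1) = s1 ++ y :: x :: s2.
Proof.
rewrite /swap_adj take_size_cat // !nth_cat ltnn ltnNge leqnSn subnn subSnn /=.
by rewrite -[x :: _]/([:: x; y] ++ s2) catA drop_size_cat ?size_cat ?addn2.
Qed.

Section Admissible.
Variables (U : choiceType) (L : nat -> set U).
Implicit Types (s : seq entry) (T : seq U).

Lemma admissible_subset s1 s2 T :
  {subset s1 <= s2} -> last (0, 0) s1 = last (0, 0) s2 ->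
  admissible L s1 T -> admissible L s2 T.
Proof.
move=> s12 last12 [uT [D [Ds1 [lastD DT]]]]; split=> //.
by exists D; split=> [y /Ds1 /s12 //|]; rewrite -last12.
Qed.

Lemma admissible_swap_last a e f T :
  admissible L (a ++ [:: f; e]) T ->
  admissible L (a ++ [:: e; f]) T \/ admissible L (a ++ [:: e]) T.
Proof.
case=> uT [D [Ds [eD DT]]]; rewrite last_cat /= in eD.
have [fD | fND] := boolP (f \in D); [left | right]; split=> //; exists D.
  rewrite last_cat; split=> // y /Ds; rewrite !mem_cat !inE.
  by case/orP=> [-> // | /orP[] ->]; rewrite !orbT.
rewrite last_cat; split=> // y yD; move: (Ds y yD); rewrite !mem_cat !inE.
case/orP=> [-> // | /orP[/eqP yf | ->]]; last by rewrite orbT.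
by rewrite -yf yD in fND.
Qed.

Lemma max_choice_widen s s' T0 :
  (forall T, admissible L s' T -> admissible L s T \/ size T <= size T0) ->
  (forall T, admissible L s T -> admissible L s' T) ->
  max_choice L s T0 -> max_choice L s' T0.
Proof.
move=> s's ss' [[T0s | [noT T0nil]] T0max].
  by split=> [|T /s's [/T0max | ] //]; left; apply: ss'.
have s'T0 T : admissible L s' T -> size T <= size T0.
  by case/s's=> [/noT [] | //].
split=> //; have [[T s'T] | noT'] := pselect (exists T, admissible L s' T).
  move: (s'T0 _ s'T); rewrite T0nil leqn0 => /nilP Tnil.
  by left; rewrite -Tnil.
by right; split=> // T s'T; apply: noT'; exists T.
Qed.

Lemma max_choice_swap (mstar : entry -> nat) Tm a x f b e m :
  max_size L (a ++ [:: x; f]) m -> m <= mstar x ->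
  e \in a ++ x :: f :: b -> e != f -> mstar e = size Tm ->
  max_choice L (upto (a ++ x :: f :: b) e) Tm ->
  max_choice L (upto (a ++ f :: x :: b) e) Tm.
Proof.
move=> [_ max_m] m_x eC ef me; have fe : f != e by rewrite eq_sym.
have [ea | ena] := boolP (e \in a); first by rewrite !upto_catl.
rewrite !upto_catr //; have [xe | xe] := eqVneq x e.
  subst x; rewrite upto_head upto_cons // upto_head; apply: max_choice_widen.
    move=> T /admissible_swap_last [/max_m Tm' | ]; last by left.
    by right; rewrite -me (leq_trans Tm').
  move=> T; apply: admissible_subset; last by rewrite !last_cat.
  by move=> y; rewrite !mem_cat !inE => /orP[-> | ->]; rewrite ?orbT.
have eb : e \in b.
  by move: eC; rewrite mem_cat (negbTE ena) !inE eq_sym (negbTE xe) (negbTE ef).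
have last_e y z : last (0, 0) (a ++ y :: z :: upto b e) = e.
  by rewrite last_cat /= last_upto.
rewrite !upto_cons //.
by apply: max_choice_widen => T admT; [left | ]; apply: admissible_subset admT;
  rewrite ?last_e // => y; rewrite (perm_mem (perm_swap2 _ _ _ _)).
Qed.

End Admissible.

Section Inner.
Variables (U : choiceType) (L : nat -> set U) (mstar : entry -> nat).

Lemma inner_perm a f b C' jf :
  inner L mstar (a ++ f :: b) (size a).+1 C' jf ->
  exists a' b', [/\ C' = a' ++ f :: b', jf = (size a').+1 & perm_eq (a ++ f :: b) C'].
Proof.
move E: (a ++ f :: b) => C; move Ej: (size a).+1 => j inn.
elim: inn a b E Ej => {C j C' jf} [C j m _ _ | C j m C' jf _ j_gt1 _ _ IH] a b EC Ej;
  subst C j; first by exists a, b.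
case/lastP: a j_gt1 IH => [// | a x] _; rewrite size_rcons subn2 -cats1 -catA /=.
rewrite swap_adj_cat => /(_ a (x :: b) erefl erefl) [a' [b' [-> -> perm']]].
by exists a', b'; split=> //; apply: perm_trans (perm_swap2 _ _ _ _) perm'.
Qed.

Lemma inner_max_choice Tm e a f b C' jf :
  inner L mstar (a ++ f :: b) (size a).+1 C' jf ->
  e \in a ++ f :: b -> e != f -> mstar e = size Tm ->
  max_choice L (upto (a ++ f :: b) e) Tm -> max_choice L (upto C' e) Tm.
Proof.
move E: (a ++ f :: b) => C; move Ej: (size a).+1 => j inn.
elim: inn a b E Ej => {C j C' jf} [// | C j m C' jf max_m j_gt1 m_le _ IH] a b EC Ej;
  subst C j.
case/lastP: a j_gt1 m_le IH max_m => [// | a x] _.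
rewrite size_rcons subn2 -cats1 -catA /= nth_cat ltnn subnn take_size_cat2 swap_adj_cat.
move=> m_x IH max_m eC ef me choice_e; apply: (IH a (x :: b)) => //.
  by rewrite (perm_mem (perm_swap2 _ _ _ _)) in eC.
exact: max_choice_swap max_m m_x eC ef me choice_e.
Qed.

End Inner.

Section Run.
Variables (U : choiceType) (L : nat -> set U) (C : nat -> seq entry).
Variables (mstar : entry -> nat) (Tmap : entry -> seq U).
Hypothesis run : noisy_run L C mstar Tmap.

Lemma noisy_run_perm l : perm_eq (C l) (map diag_pair (iota 0 l)).
Proof.
elim: l => [|l IH]; first by rewrite run.1.
have [j [inn _]] := run.2 l.
have /(congr1 S) size_l : size (C l) = l by rewrite (perm_size IH) size_map size_iota.
move: inn; rewrite -cats1 -[X in inner _ _ _ X _ _]size_l.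
case/inner_perm=> _ [_ [_ _ perm_l]].
by rewrite -(permPl perm_l) -addn1 iotaD map_cat perm_cat2r.
Qed.

Lemma noisy_run_uniq l : uniq (C l).
Proof.
by rewrite (perm_uniq (noisy_run_perm l)) (map_inj_uniq diag_pair_inj) iota_uniq.
Qed.

Lemma noisy_run_step l : exists j,
  [/\ inner L mstar (C l ++ [:: diag_pair l]) (size (C l)).+1 (C l.+1) j,
      max_choice L (take j (C l.+1)) (Tmap (diag_pair l))
    & mstar (diag_pair l) = size (Tmap (diag_pair l))].
Proof.
have size_l : size (C l) = l.
  by rewrite (perm_size (noisy_run_perm l)) size_map size_iota.
by have [j [inn [choice me]]] := run.2 l; exists j; rewrite cats1 size_l.
Qed.

Lemma noisy_run_inserted q :
  diag_pair q \in C q.+1 /\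
  max_choice L (upto (C q.+1) (diag_pair q)) (Tmap (diag_pair q)).
Proof.
have [j [inn choice _]] := noisy_run_step q.
have [a [b [Cq jE _]]] := inner_perm inn.
have qNa : diag_pair q \notin a.
  by move: (noisy_run_uniq q.+1); rewrite Cq cat_uniq => /and3P[_ /norP[]].
move: choice; rewrite jE Cq -cat_rcons take_size_cat ?size_rcons // cat_rcons.
by rewrite mem_cat mem_head orbT upto_catr // upto_head cats1.
Qed.

Lemma noisy_run_preserved q l : q < l ->
  diag_pair q \in C l -> max_choice L (upto (C l) (diag_pair q)) (Tmap (diag_pair q)) ->
  diag_pair q \in C l.+1 /\
  max_choice L (upto (C l.+1) (diag_pair q)) (Tmap (diag_pair q)).
Proof.
move=> ql qC choice.
have [j [inn _ _]] := noisy_run_step l.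
have [_ [_ _ mq]] := noisy_run_step q.
have [_ [_ [_ _ perm_l]]] := inner_perm inn.
have ql_neq : diag_pair q != diag_pair l.
  by apply: contraTneq ql => /diag_pair_inj ->; rewrite ltnn.
split; first by rewrite -(perm_mem perm_l) mem_cat qC.
by apply: inner_max_choice inn _ ql_neq mq _; rewrite ?mem_cat ?qC ?upto_catl.
Qed.

End Run.

Theorem mainTheorem15 (U : countType) (L : nat -> set U)
    (U_inf : infinite_set [set: U])
    (L_inf : forall b, 1 <= b -> infinite_set (L b))
    (C : nat -> seq entry) (mstar : entry -> nat) (Tmap : entry -> seq U)
    (run : noisy_run L C mstar Tmap)
    (n i q l : nat) (Hi : 1 <= i) (Hq : diag_pair q = (n, i)) (Hl : q < l) :
  let k := (index (n, i) (C l)).+1 in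
  max_choice L (take k (C l)) (Tmap (n, i)).
Proof.
rewrite /= -Hq.
suff [_ ?] : diag_pair q \in C l /\
             max_choice L (upto (C l) (diag_pair q)) (Tmap (diag_pair q)) by [].
elim: l Hl => [// | l IH]; rewrite ltnS leq_eqVlt => /predU1P[<- | ql].
  exact: noisy_run_inserted run q.
by have [qC choice] := IH ql; apply: (noisy_run_preserved run).
Qed.
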